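(* Let $(p_n)_{n \ge 1}$ be a strictly increasing sequence of prime numbers and fix $\ell \in \mathbb{N}$. Then $M = \left\langle \frac{1}{p_i p_{i+\ell}} \;\middle|\; i \in \mathbb{N} \right\rangle$ is an atomic weak reciprocal Puiseux monoid that does not satisfy the ascending chain condition on principal ideals (ACCP).
   Context: A Puiseux monoid is an additive submonoid of $(\mathbb{Q}_{\ge 0},+)$. A weak reciprocal Puiseux monoid is one of the form $\langle \frac{1}{d_n} \mid n \in \mathbb{N}\rangle$ for a strictly increasing sequence $(d_n)_{n\ge1}$ of positive integers. An atom of $M$ is a nonzero element $a$ such that $a=x+y$ with $x,y\in M$ forces $x=0$ or $y=0$; $M$ is atomic if each element is a finite sum of atoms. A principal ideal of $M$ is a set $r + M = \{r+q \mid q\in M\}$ with $r \in M$; $M$ satisfies the ACCP if every ascending chain of principal ideals is eventually constant. *)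

From mathcomp Require Import all_boot all_order all_algebra.
Set Implicit Arguments. Unset Strict Implicit. Unset Printing Implicit Defensive.
Import Order.TTheory GRing.Theory Num.Theory.
Local Open Scope ring_scope.

Definition gen (g : nat -> rat) : rat -> Prop :=
  fun q => exists s : seq nat, q = \sum_(i <- s) g i.

Definition puiseux_monoid (M : rat -> Prop) : Prop :=
  [/\ M 0, (forall x y, M x -> M y -> M (x + y)) & (forall x, M x -> 0 <= x)].

Definition weak_reciprocal (M : rat -> Prop) : Prop :=
  puiseux_monoid M /\
  exists d : nat -> nat,
    (forall m n, (m < n)%N -> (d m < d n)%N) /\ (forall n, (0 < d n)%N) /\
    (forall q, M q <-> gen (fun n => 1 / (d n)%:R) q).

Definition atom (M : rat -> Prop) (a : rat) : Prop :=
  M a /\ a <> 0 /\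
  (forall x y, M x -> M y -> a = x + y -> x = 0 \/ y = 0).

Definition atomic (M : rat -> Prop) : Prop :=
  forall q, M q -> exists s : seq rat,
    (forall a, a \in s -> atom M a) /\ q = \sum_(a <- s) a.

Definition pideal (M : rat -> Prop) (r : rat) : rat -> Prop :=
  fun x => exists q, M q /\ x = r + q.

Definition ACCP (M : rat -> Prop) : Prop :=
  forall r : nat -> rat,
    (forall n, M (r n)) ->
    (forall n x, pideal M (r n) x -> pideal M (r n.+1) x) ->
    exists N, forall n, (N <= n)%N -> forall x, pideal M (r n) x <-> pideal M (r N) x.

(* Write a_j = 1/(p_j p_(j+l)); these generators strictly decrease.  Suppose
   a_i were a sum of smaller generators, so all summands have index > i.  For
   n > i let T_n be the part of the sum with indices in n + lN.  By descending
   induction p_n T_n is an integer: T_n = c a_n + T_(n+l) gives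
   p_n p_(n+l) T_n in Z, while T_n = a_i - (other summands) has denominator
   prime to p_(n+l).  Taking n in (i, i+l] in the residue class of a summand
   yields 1 <= p_n T_n <= p_(i+l) a_i = 1/p_i, a contradiction; so every a_i is
   an atom.  ACCP fails along 1/p_(kl), since
   1/p_(kl) = 1/p_((k+1)l) + (p_((k+1)l) - p_(kl)) a_(kl). *)

From mathcomp Require Import all_boot all_order all_algebra zify ring.
Import Order.TTheory GRing.Theory Num.Theory.
Set Implicit Arguments.
Unset Strict Implicit.
Local Open Scope ring_scope.

Section GeneratedMonoid.
Variable g : nat -> rat.

Lemma gen_generator j : gen g (g j).
Proof. by exists [:: j]; rewrite big_seq1. Qed.

Lemma gen0 : gen g 0.
Proof. by exists [::]; rewrite big_nil. Qed.

Lemma genD x y : gen g x -> gen g y -> gen g (x + y).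
Proof. by move=> [s ->] [t ->]; exists (s ++ t); rewrite big_cat. Qed.

Lemma genMn j c : gen g (g j *+ c).
Proof. by exists (nseq c j); rewrite big_nseq iter_addr_0. Qed.

Hypothesis g_gt0 : forall j, 0 < g j.

Lemma gen_ge0 x : gen g x -> 0 <= x.
Proof. by move=> [s ->]; apply: sumr_ge0 => j _; apply: ltW. Qed.

Lemma puiseux_monoid_gen : puiseux_monoid (gen g).
Proof. by split; [apply: gen0 | apply: genD | apply: gen_ge0]. Qed.

Lemma sum_gen_gt0 s : s != [::] -> 0 < \sum_(j <- s) g j.
Proof.
by case: s => // j s _; rewrite big_cons ltr_pwDl // sumr_ge0 // => i _; apply: ltW.
Qed.

Lemma gen_le_sum (P : pred nat) s j :
  j \in s -> P j -> g j <= \sum_(k <- s | P k) g k.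
Proof.
move=> js Pj; rewrite (big_rem j js) Pj lerDl sumr_ge0 // => k _; exact: ltW.
Qed.

Lemma atom_gen i :
  (forall s, (forall j, j \in s -> g j < g i) -> g i <> \sum_(j <- s) g j) ->
  atom (gen g) (g i).
Proof.
move=> not_sum_smaller; split; first exact: gen_generator.
split; first exact/eqP/lt0r_neq0.
move=> _ _ [s ->] [t ->] gi_st.
have [->|s0] := eqVneq s [::]; first by left; rewrite big_nil.
have [->|t0] := eqVneq t [::]; first by right; rewrite big_nil.
exfalso; apply: (not_sum_smaller (s ++ t)); last by rewrite big_cat.
move=> j; rewrite mem_cat gi_st => /orP[js | jt].
  by apply: ltr_pwDr; [exact: sum_gen_gt0 | exact: (@gen_le_sum predT)].
by apply: ltr_pwDl; [exact: sum_gen_gt0 | exact: (@gen_le_sum predT)].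
Qed.

Lemma atomic_gen : (forall i, atom (gen g) (g i)) -> atomic (gen g).
Proof.
move=> atom_g _ [s ->]; exists (map g s); split; last by rewrite big_map.
by move=> _ /mapP[j _ ->]; apply: atom_g.
Qed.

End GeneratedMonoid.

Lemma not_ACCP_decreasing (M : rat -> Prop) (r : nat -> rat) :
  puiseux_monoid M -> (forall n, M (r n)) -> (forall n, M (r n - r n.+1)) ->
  (forall n, r n.+1 < r n) -> ~ ACCP M.
Proof.
move=> [M0 MD M_ge0] Mr Mdiff r_decr /(_ r Mr) [].
  move=> n _ [q [Mq ->]]; exists (r n - r n.+1 + q); split; first exact: MD.
  by rewrite addrA addrCA subrr addr0.
move=> N /(_ N.+1 (leqnSn N) (r N.+1)) [to_rN _].
have [q [/M_ge0 q_ge0 rN]] : pideal M (r N) (r N.+1).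
  by apply: to_rN; exists 0; rewrite addr0; split.
by have := r_decr N; rewrite rN ltNge lerDl q_ge0.
Qed.

(* [x] lies in the localization Z_(q). *)
Definition qintegral (q : nat) (x : rat) : Prop :=
  exists2 N : nat, ~~ (q %| N)%N & N%:R * x \is a Num.int.

Section QIntegral.
Variable q : nat.
Hypothesis q_prime : prime q.

Lemma qintegral0 : qintegral q 0.
Proof. by exists 1%N; rewrite ?mulr0 ?int_num0 // dvdn1 neq_ltn prime_gt1 ?orbT. Qed.

Lemma qintegral_invn n : ~~ (q %| n)%N -> qintegral q n%:R^-1.
Proof.
move=> qn; exists n => //; rewrite mulfV ?int_num1 // pnatr_eq0.
by apply: contraNneq qn => ->; rewrite dvdn0.
Qed.

Lemma qintegralD x y : qintegral q x -> qintegral q y -> qintegral q (x + y).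
Proof.
move=> [M qM Mx] [N qN Ny]; exists (M * N)%N.
  by rewrite Euclid_dvdM // negb_or qM qN.
have -> : (M * N)%:R * (x + y) = M%:R * x * N%:R + M%:R * (N%:R * y).
  by rewrite natrM; ring.
by apply: rpredD; apply: rpredM; rewrite ?natr_int.
Qed.

Lemma qintegralN x : qintegral q x -> qintegral q (- x).
Proof. by move=> [N qN Nx]; exists N; rewrite // mulrN rpredN. Qed.

Lemma qintegral_sum (I : Type) (s : seq I) (P : pred I) (F : I -> rat) :
  (forall i, P i -> qintegral q (F i)) -> qintegral q (\sum_(i <- s | P i) F i).
Proof. by move=> qF; apply: big_ind => //; [exact: qintegral0 | exact: qintegralD]. Qed.

Lemma qintegral_cancel d x :
  qintegral q x -> (d * q)%:R * x \is a Num.int -> d%:R * x \is a Num.int.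
Proof.
move=> [N qN /intrP[z Nx]] /intrP[w dqx].
have w_eq : (N%:Z * w = (d * q)%:Z * z)%R.
  by apply: (@intr_inj rat); rewrite !intrM -dqx -Nx !pmulrn mulrCA.
have /dvdzP[k w_kq] : (q %| w)%Z.
  have : (q %| N%:Z * w)%Z by rewrite w_eq PoszM mulrAC dvdz_mull.
  by rewrite !dvdzE abszM absz_nat Euclid_dvdM // (negbTE qN).
have q0 : (q%:R : rat) != 0 by rewrite pnatr_eq0 -lt0n prime_gt0.
suff -> : d%:R * x = k%:~R by rewrite intr_int.
by apply: (mulIf q0); rewrite mulrAC -natrM dqx w_kq intrM pmulrn.
Qed.

End QIntegral.

Definition residue_tail (ell n j : nat) : bool := (n <= j)%N && (j == n %[mod ell]).

Lemma residue_tail_step ell n j : (0 < ell)%N ->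
  residue_tail ell n j = (j == n) || residue_tail ell (n + ell) j.
Proof.
move=> ell_gt0; rewrite /residue_tail modnDr.
have [-> | j_neq_n] := eqVneq j n; first by rewrite leqnn eqxx.
apply/andP/andP => -[le_nj j_n]; split => //; last first.
  by apply: leq_trans le_nj; rewrite leq_addr.
have lt_nj : (n < j)%N by rewrite ltn_neqAle eq_sym j_neq_n.
rewrite (eqn_mod_dvd _ le_nj) in j_n.
have : (ell <= j - n)%N by apply: dvdn_leq; rewrite ?subn_gt0.
lia.
Qed.

Lemma sum_residue_tail ell (F : nat -> rat) s n : (0 < ell)%N ->
  \sum_(j <- s | residue_tail ell n j) F j =
  \sum_(j <- s | j == n) F j + \sum_(j <- s | residue_tail ell (n + ell) j) F j.
Proof.
move=> ell_gt0; rewrite (bigID (pred1 n)) /=; congr (_ + _); apply: eq_bigl => j.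
  by rewrite residue_tail_step //; case: eqP; rewrite ?andbF.
rewrite residue_tail_step //; case: eqVneq => [->|_]; last by rewrite andbT.
by rewrite /residue_tail ltn_geF // -{1}[n]addn0 ltn_add2l.
Qed.

Section ReciprocalPrimePairs.
Variables (p : nat -> nat) (ell : nat).
Hypotheses (p_prime : forall n, prime (p n))
  (p_incr : forall m n, (m < n)%N -> (p m < p n)%N) (ell_gt0 : (0 < ell)%N).

Definition recip_pair (j : nat) : rat := 1 / (p j * p (j + ell))%:R.

Let p_leq : {mono p : m n / (m <= n)%N}. Proof. exact: leq_mono. Qed.
Let p_inj : injective p. Proof. exact: incn_inj. Qed.

Lemma recip_pair_gt0 j : 0 < recip_pair j.
Proof. by rewrite /recip_pair div1r invr_gt0 ltr0n muln_gt0 !prime_gt0. Qed.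

Lemma recip_pair_le m n : (m <= n)%N -> recip_pair n <= recip_pair m.
Proof.
move=> le_mn; rewrite /recip_pair !div1r lef_pV2 ?posrE ?ltr0n ?muln_gt0 ?prime_gt0 //.
by rewrite ler_nat leq_mul ?p_leq ?leq_add2r.
Qed.

Lemma recip_pairK j : (p j * p (j + ell))%:R * recip_pair j = 1.
Proof.
by rewrite /recip_pair mul1r mulfV // pnatr_eq0 muln_eq0 negb_or -!lt0n !prime_gt0.
Qed.

Lemma recip_pair_qintegral k j :
  k != j -> k != j + ell -> qintegral (p k) (recip_pair j).
Proof.
move=> kj kjl; rewrite /recip_pair div1r; apply: qintegral_invn.
by rewrite Euclid_dvdM // !dvdn_prime2 // !(inj_eq p_inj) negb_or kj kjl.
Qed.

Section NotSumOfSmaller.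
Variables (i : nat) (s : seq nat).
Hypothesis pair_i_sum : recip_pair i = \sum_(j <- s) recip_pair j.

Let tail_sum n := \sum_(j <- s | residue_tail ell n j) recip_pair j.

Lemma tail_sum_qintegral n : (i < n)%N -> qintegral (p (n + ell)) (tail_sum n).
Proof.
move=> lt_in.
have -> : tail_sum n =
    recip_pair i - \sum_(j <- s | ~~ residue_tail ell n j) recip_pair j.
  by rewrite pair_i_sum (bigID (residue_tail ell n)) addrK.
apply: qintegralD => //; first by apply: recip_pair_qintegral; lia.
apply/qintegralN/qintegral_sum => // j tail_j.
apply: recip_pair_qintegral; apply: contraNneq tail_j.
  by move=> <-; rewrite /residue_tail leq_addr modnDr eqxx.
by move=> /addIn <-; rewrite /residue_tail leqnn eqxx.
Qed.

Lemma tail_sum_scaled_int n : (i < n)%N -> (p n)%:R * tail_sum n \is a Num.int.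
Proof.
suff tail_int k m : (i < m)%N -> (forall j, j \in s -> (j < m + k)%N) ->
    (p m)%:R * tail_sum m \is a Num.int.
  move=> lt_in; apply: (tail_int (\max_(j <- s) j).+1) => // j js.
  have : (j <= \max_(k <- s) k)%N by apply: leq_bigmax_seq.
  lia.
elim: k m => [|k IHk] m lt_im s_lt.
  rewrite /tail_sum big_seq_cond big_pred0 ?mulr0 ?int_num0 // => j.
  by apply/andP => -[/s_lt + /andP[+ _]]; lia.
apply: (qintegral_cancel (p_prime (m + ell)) (tail_sum_qintegral lt_im)).
rewrite /tail_sum sum_residue_tail // -/(tail_sum _) mulrDr.
apply: rpredD.
  rewrite mulr_sumr; apply: rpred_sum => j /eqP ->.
  by rewrite recip_pairK int_num1.
rewrite natrM -mulrA; apply/rpredM/IHk; rewrite ?natr_int //; first by lia.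
by move=> j /s_lt; lia.
Qed.

Lemma not_sum_of_later : (forall j, j \in s -> (i < j)%N) -> False.
Proof.
move=> later.
have [m ms] : exists m, m \in s.
  case: s pair_i_sum => [|m t _]; last by exists m; rewrite mem_head.
  by rewrite big_nil => /eqP; rewrite gt_eqF ?recip_pair_gt0.
pose n := (i.+1 + (m - i.+1) %% ell)%N.
have lt_in : (i < n)%N by lia.
have le_n_iell : (n <= i + ell)%N by have := ltn_pmod (m - i.+1) ell_gt0; lia.
have tail_m : residue_tail ell n m.
  have lt_im := later m ms.
  rewrite /residue_tail /n modnDmr subnKC // eqxx andbT.
  by have := leq_mod (m - i.+1) ell; lia.
have tail_gt0 : 0 < tail_sum n.
  exact: lt_le_trans (recip_pair_gt0 m) (gen_le_sum recip_pair_gt0 ms tail_m).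
have tail_le : tail_sum n <= recip_pair i.
  rewrite pair_i_sum [X in _ <= X](bigID (residue_tail ell n)) lerDl.
  by rewrite sumr_ge0 // => j _; apply/ltW/recip_pair_gt0.
have p_n_gt0 : 0 < (p n)%:R :> rat by rewrite ltr0n prime_gt0.
have := norm_intr_ge1 (tail_sum_scaled_int lt_in)
  (lt0r_neq0 (mulr_gt0 p_n_gt0 tail_gt0)).
rewrite gtr0_norm ?mulr_gt0 // => /le_trans/(_ (ler_wpM2l (ltW p_n_gt0) tail_le)).
rewrite /recip_pair mulrA mulr1 ler_pdivlMr ?ltr0n ?muln_gt0 ?prime_gt0 //.
rewrite mul1r ler_nat.
have : (2 * p (i + ell) <= p i * p (i + ell))%N by rewrite leq_mul2r prime_gt1 ?orbT.
have : (p n <= p (i + ell))%N by rewrite p_leq.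
have := prime_gt0 (p_prime (i + ell)); lia.
Qed.

End NotSumOfSmaller.

Lemma recip_pair_atom i : atom (gen recip_pair) (recip_pair i).
Proof.
apply: (atom_gen recip_pair_gt0) => s smaller /not_sum_of_later; apply=> j /smaller.
by apply: contraTT; rewrite -leqNgt -leNgt; apply: recip_pair_le.
Qed.

Lemma weak_reciprocal_recip_pairs : weak_reciprocal (gen recip_pair).
Proof.
split; first exact: puiseux_monoid_gen recip_pair_gt0.
exists (fun n => p n * p (n + ell))%N; split=> [m n lt_mn | ]; last split => // n.
  by apply: ltn_mul; apply: p_incr; rewrite ?ltn_add2r.
by rewrite muln_gt0 !prime_gt0.
Qed.

Lemma invp_recip_pair n : (p n)%:R^-1 = recip_pair n *+ p (n + ell).
Proof.
by rewrite /recip_pair -mulr_natr natrM; field; rewrite !pnatr_eq0 -!lt0n !prime_gt0.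
Qed.

Lemma invp_sub_recip_pair n :
  (p n)%:R^-1 - (p (n + ell))%:R^-1 = recip_pair n *+ (p (n + ell) - p n).
Proof.
rewrite mulrnBr ?p_leq ?leq_addr // -invp_recip_pair /recip_pair -mulr_natr natrM.
by field; rewrite !pnatr_eq0 -!lt0n !prime_gt0.
Qed.

Lemma not_ACCP_recip_pairs : ~ ACCP (gen recip_pair).
Proof.
apply: (@not_ACCP_decreasing _ (fun k => (p (k * ell))%:R^-1)).
- exact: puiseux_monoid_gen recip_pair_gt0.
- by move=> k; rewrite invp_recip_pair; apply: genMn.
- by move=> k; rewrite mulSnr invp_sub_recip_pair; apply: genMn.
move=> k; rewrite mulSnr ltf_pV2 ?posrE ?ltr0n ?prime_gt0 // ltr_nat.
by apply: p_incr; rewrite -addn1 leq_add2l.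
Qed.

End ReciprocalPrimePairs.

Theorem proposition4p7 (p : nat -> nat) (ell : nat)
  (hprime : forall n, prime (p n))
  (hincr : forall m n, (m < n)%N -> (p m < p n)%N)
  (hell : (0 < ell)%N) :
  let M := gen (fun i => 1 / (p i * p (i + ell))%:R) in
  [/\ puiseux_monoid M, weak_reciprocal M, atomic M & ~ ACCP M].
Proof.
split.
- exact: puiseux_monoid_gen (recip_pair_gt0 ell hprime).
- exact: weak_reciprocal_recip_pairs.
- exact: atomic_gen (recip_pair_atom hprime hincr hell).
- exact: not_ACCP_recip_pairs.
Qed.
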